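(* For every integer $n\ge1$, $\Omega'_n=\Omega_n$.
   Context: $V_n=\{(v_0,v_1,v_2)\in\mathbb{Z}^3: 0\le v_0\le v_1\le 1,\ v_1\le v_2\le n+1\}$, elements written as words $v_0v_1v_2$. A Wang tile is $t=(a,b,c,d)$ with $\mathrm{RIGHT}(t)=a$, $\mathrm{TOP}(t)=b$, $\mathrm{LEFT}(t)=c$, $\mathrm{BOTTOM}(t)=d$; $\hat t=(b,a,d,c)$, $\hat S=\{\hat t:t\in S\}$. Define (as (right, top, left, bottom)): $W_n=\{(11(i+1),11(j+1),11i,11j):1\le i,j\le n\}$; $b_n^i=(00(i+1),111,00i,11n)$, $B'_n=\{b_n^i:0\le i\le n\}$, $B_n=\{b_n^i:0\le i\le n-1\}$; $G_n=\{(01(i+1),111,00i,11(n+1)):0\le i\le n\}$; $Y_n=\{(01(i+1),112,01i,11(n+1)):1\le i\le n\}$; $A_n=\{(00(i+1),112,01i,11n):1\le i\le n\}$; $j_n^{k,l,r,s}=((0,k,l),(0,r,s),(0,s,r+n),(0,l,k+n))$ for $(k,l),(r,s)\in\{(0,0),(0,1),(1,1)\}$; $J'_n$ is the set of these 9 tiles and $J_n=J'_n\setminus\{j_n^{0,0,1,1},j_n^{1,1,0,0}\}$. $\mathcal T'_n=W_n\cup B'_n\cup G_n\cup Y_n\cup A_n\cup\hat B'_n\cup\hat G_n\cup\hat Y_n\cup\hat A_n\cup J'_n$ and $\mathcal T_n=W_n\cup B_n\cup G_n\cup Y_n\cup\hat B_n\cup\hat G_n\cup\hat Y_n\cup J_n$.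 $\Omega'_n$ (resp. $\Omega_n$) is the set of configurations $x:\mathbb Z^2\to\mathcal T'_n$ (resp. $\mathcal T_n$) with $\mathrm{RIGHT}(x(\mathbf m))=\mathrm{LEFT}(x(\mathbf m+\mathbf e_1))$ and $\mathrm{TOP}(x(\mathbf m))=\mathrm{BOTTOM}(x(\mathbf m+\mathbf e_2))$ for all $\mathbf m\in\mathbb Z^2$. *)

From Stdlib Require Import ZArith Lia.
Open Scope Z_scope.

(* A color is a word v0 v1 v2, encoded as the triple (v0, v1, v2). *)
Definition color := (Z * Z * Z)%type.
Definition col (a b c : Z) : color := (a, b, c).

Definition V (n : Z) (v : color) : Prop :=
  let '(v0, v1, v2) := v in 0 <= v0 <= v1 /\ v1 <= 1 /\ v1 <= v2 <= n + 1.

Definition tile := (color * color * color * color)%type.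
Definition mk_tile (a b c d : color) : tile := (a, b, c, d).
Definition RIGHT (t : tile) : color := let '(a, _, _, _) := t in a.
Definition TOP (t : tile) : color := let '(_, b, _, _) := t in b.
Definition LEFT (t : tile) : color := let '(_, _, c, _) := t in c.
Definition BOTTOM (t : tile) : color := let '(_, _, _, d) := t in d.

Definition hat (t : tile) : tile := let '(a, b, c, d) := t in (b, a, d, c).

Definition tileset := tile -> Prop.
Definition hatS (S : tileset) : tileset := fun t => exists s, S s /\ t = hat s.
Definition unionS (S1 S2 : tileset) : tileset := fun t => S1 t \/ S2 t.

Definition W_ (n : Z) : tileset := fun t => exists i j, 1 <= i <= n /\ 1 <= j <= n /\
  t = mk_tile (col 1 1 (i+1)) (col 1 1 (j+1)) (col 1 1 i) (col 1 1 j).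

Definition b_tile (n i : Z) : tile :=
  mk_tile (col 0 0 (i+1)) (col 1 1 1) (col 0 0 i) (col 1 1 n).
Definition B'_ (n : Z) : tileset := fun t => exists i, 0 <= i <= n /\ t = b_tile n i.
Definition B_ (n : Z) : tileset := fun t => exists i, 0 <= i <= n - 1 /\ t = b_tile n i.

Definition G_ (n : Z) : tileset := fun t => exists i, 0 <= i <= n /\
  t = mk_tile (col 0 1 (i+1)) (col 1 1 1) (col 0 0 i) (col 1 1 (n+1)).
Definition Y_ (n : Z) : tileset := fun t => exists i, 1 <= i <= n /\
  t = mk_tile (col 0 1 (i+1)) (col 1 1 2) (col 0 1 i) (col 1 1 (n+1)).
Definition A_ (n : Z) : tileset := fun t => exists i, 1 <= i <= n /\
  t = mk_tile (col 0 0 (i+1)) (col 1 1 2) (col 0 1 i) (col 1 1 n).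

Definition kl_ok (k l : Z) : Prop := (k = 0 /\ l = 0) \/ (k = 0 /\ l = 1) \/ (k = 1 /\ l = 1).

Definition j_tile (n k l r s : Z) : tile :=
  mk_tile (col 0 k l) (col 0 r s) (col 0 s (r + n)) (col 0 l (k + n)).
Definition J'_ (n : Z) : tileset := fun t => exists k l r s,
  kl_ok k l /\ kl_ok r s /\ t = j_tile n k l r s.
Definition J_ (n : Z) : tileset := fun t => exists k l r s,
  kl_ok k l /\ kl_ok r s /\ t = j_tile n k l r s /\
  t <> j_tile n 0 0 1 1 /\ t <> j_tile n 1 1 0 0.

Definition T'_ (n : Z) : tileset := fun t =>
  W_ n t \/ B'_ n t \/ G_ n t \/ Y_ n t \/ A_ n t \/
  hatS (B'_ n) t \/ hatS (G_ n) t \/ hatS (Y_ n) t \/ hatS (A_ n) t \/ J'_ n t.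
Definition T_ (n : Z) : tileset := fun t =>
  W_ n t \/ B_ n t \/ G_ n t \/ Y_ n t \/
  hatS (B_ n) t \/ hatS (G_ n) t \/ hatS (Y_ n) t \/ J_ n t.

Definition configuration := (Z * Z) -> tile.
Definition Omega (S : tileset) (x : configuration) : Prop :=
  (forall m, S (x m)) /\
  (forall m1 m2, RIGHT (x (m1, m2)) = LEFT (x (m1 + 1, m2))) /\
  (forall m1 m2, TOP (x (m1, m2)) = BOTTOM (x (m1, m2 + 1))).

(* Every tile of T'_n has v0 (TOP) = v0 (BOTTOM) and v0 (RIGHT) = v0 (LEFT), so in a valid
   configuration every column and every row has a type in {0, 1}: the v0 of its vertical,
   resp. horizontal, colours.  Going up a column, the counter v2 - v0 of the vertical colour
   grows by 1 across a row of type 1 and is reset to the flag v1 of the left colour across a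
   row of type 0.  Counters are nonnegative, so below every row there is a row of type 0
   (transposing: left of every column there is a column of type 0), and the counters of two
   columns in the same row differ by at most 1.

   Up to hat, T'_n \ T_n consists of b^n, the tiles of A_n and j^{1,1,0,0}.  The right colour
   00(n+1) of b^n is no left colour.  The left neighbour of an A tile has right flag 1, so the
   counter gap forces its column to have type 1 and a counter one more than the A tile; at the
   next row of type 0 below, the flags then make the tile of that column an A tile.  Hence
   every column to the left of an A tile contains an A tile, contradicting the existence of a
   column of type 0 there.  Left of j^{1,1,0,0} the counter gap leaves only a J tile,
   which forces n = 1, and the two tiles below this pair do not match.  Hats of these tiles
   are excluded by transposing the configuration. *)

From Stdlib Require Import ZArith Lia.
Open Scope Z_scope.

Definition v0 (c : color) : Z := let '(a, _, _) := c in a.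
Definition v1 (c : color) : Z := let '(_, b, _) := c in b.
Definition v2 (c : color) : Z := let '(_, _, d) := c in d.
Definition counter (c : color) : Z := v2 c - v0 c.

Lemma V_bounds n c : V n c -> 0 <= v0 c <= v1 c /\ v1 c <= 1 /\ v1 c <= v2 c <= n + 1.
Proof. now destruct c as [[a b] d]. Qed.

Lemma Z_shift_invariant_const {A : Type} (f : Z -> A) :
  (forall y, f (y + 1) = f y) -> forall y y', f y = f y'.
Proof.
  intros Hf.
  assert (Hd : forall y d, 0 <= d -> f (y + d) = f y).
  { intros y; apply natlike_ind.
    - now rewrite Z.add_0_r.
    - intros d _ IH. unfold Z.succ. now rewrite Z.add_assoc, Hf. }
  intros y y'. destruct (Z.le_ge_cases y y').
  - replace y' with (y + (y' - y)) by lia. symmetry; apply Hd; lia.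
  - replace y with (y' + (y - y')) by lia. apply Hd; lia.
Qed.

Lemma hat_hat t : hat (hat t) = t.
Proof. now destruct t as [[[a b] c] d]. Qed.

Lemma RIGHT_hat t : RIGHT (hat t) = TOP t.
Proof. now destruct t as [[[a b] c] d]. Qed.

Lemma TOP_hat t : TOP (hat t) = RIGHT t.
Proof. now destruct t as [[[a b] c] d]. Qed.

Lemma LEFT_hat t : LEFT (hat t) = BOTTOM t.
Proof. now destruct t as [[[a b] c] d]. Qed.

Lemma BOTTOM_hat t : BOTTOM (hat t) = LEFT t.
Proof. now destruct t as [[[a b] c] d]. Qed.

Lemma hatS_hat S t : S t -> hatS S (hat t).
Proof. now exists t. Qed.

Lemma hat_hatS S t : hatS S t -> S (hat t).
Proof. intros (s & Hs & ->). now rewrite hat_hat. Qed.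

Ltac destruct_T' H :=
  unfold T'_, W_, B'_, G_, Y_, A_, hatS, J'_, kl_ok in H;
  destruct H as
    [(?i & ?j & ?Hi & ?Hj & ->)
    |[(?i & ?Hi & ->)|[(?i & ?Hi & ->)|[(?i & ?Hi & ->)|[(?i & ?Hi & ->)
    |[(?s & (?i & ?Hi & ->) & ->)|[(?s & (?i & ?Hi & ->) & ->)
    |[(?s & (?i & ?Hi & ->) & ->)|[(?s & (?i & ?Hi & ->) & ->)
    |(?k & ?l & ?r & ?s & [[-> ->]|[[-> ->]|[-> ->]]]
                        & [[-> ->]|[[-> ->]|[-> ->]]] & ->)]]]]]]]]].

Ltac tile_simpl :=
  cbv beta iota zeta delta
    [RIGHT TOP LEFT BOTTOM hat V v0 v1 v2 counter mk_tile col b_tile j_tile] in *;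
  repeat match goal with H : (_, _) = (_, _) |- _ => injection H; clear H; intros end.

Ltac tile_arith := tile_simpl; lia.

Section Tiles.
Variable n : Z.
Hypothesis hn : 1 <= n.

Lemma T'_colors_V t :
  T'_ n t -> V n (RIGHT t) /\ V n (TOP t) /\ V n (LEFT t) /\ V n (BOTTOM t).
Proof. intros Ht; destruct_T' Ht; tile_arith. Qed.

Lemma T'_v0_TOP t : T'_ n t -> v0 (TOP t) = v0 (BOTTOM t).
Proof. intros Ht; destruct_T' Ht; tile_arith. Qed.

Lemma T'_counter_TOP t : T'_ n t ->
  (v0 (LEFT t) = 1 /\ counter (TOP t) = counter (BOTTOM t) + 1) \/
  (v0 (LEFT t) = 0 /\ counter (TOP t) = v1 (LEFT t)).
Proof. intros Ht; destruct_T' Ht; tile_arith. Qed.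

Lemma T'_v2_BOTTOM t : T'_ n t -> v0 (LEFT t) = 0 -> v2 (BOTTOM t) = n + v1 (RIGHT t).
Proof. intros Ht; destruct_T' Ht; tile_arith. Qed.

Lemma T'_A_of_flags t : T'_ n t ->
  v0 (BOTTOM t) = 1 -> v0 (LEFT t) = 0 -> v1 (LEFT t) = 1 -> v1 (RIGHT t) = 0 -> A_ n t.
Proof.
  intros Ht; destruct_T' Ht; intros; try tile_arith.
  exists i; split; [lia | reflexivity].
Qed.

Lemma A_colors t : A_ n t ->
  v0 (LEFT t) = 0 /\ v1 (LEFT t) = 1 /\ v0 (BOTTOM t) = 1 /\ counter (BOTTOM t) = n - 1.
Proof. intros (i & Hi & ->); tile_arith. Qed.

Lemma T'_LEFT_neq t : T'_ n t -> LEFT t <> col 0 0 (n + 1).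
Proof. intros Ht; destruct_T' Ht; intro; tile_arith. Qed.

Lemma T'_BOTTOM_of_RIGHT_00n t :
  T'_ n t -> v0 (BOTTOM t) = 0 -> RIGHT t = col 0 0 n -> BOTTOM t = col 0 1 n.
Proof.
  intros Ht; destruct_T' Ht; intros; tile_simpl; try lia.
  all: f_equal; lia.
Qed.

Lemma T'_TOP_01n_mismatch u w : T'_ n u -> T'_ n w -> RIGHT u = LEFT w ->
  TOP u = col 0 1 n -> TOP w = col 0 1 (n + 1) -> False.
Proof. intros Hu Hw; destruct_T' Hu; destruct_T' Hw; intros; tile_arith. Qed.

Lemma W_hat t : W_ n t -> W_ n (hat t).
Proof. intros (i & j & Hi & Hj & ->). now exists j, i. Qed.

Lemma J'_hat t : J'_ n t -> J'_ n (hat t).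
Proof. intros (k & l & r & s & Hkl & Hrs & ->). now exists r, s, k, l. Qed.

Lemma T'_hat t : T'_ n t -> T'_ n (hat t).
Proof.
  intros [H|[H|[H|[H|[H|[H|[H|[H|[H|H]]]]]]]]]; unfold T'_.
  - left; apply W_hat, H.
  - do 5 right; left; apply hatS_hat, H.
  - do 6 right; left; apply hatS_hat, H.
  - do 7 right; left; apply hatS_hat, H.
  - do 8 right; left; apply hatS_hat, H.
  - right; left; apply hat_hatS, H.
  - do 2 right; left; apply hat_hatS, H.
  - do 3 right; left; apply hat_hatS, H.
  - do 4 right; left; apply hat_hatS, H.
  - do 9 right; apply J'_hat, H.
Qed.

Lemma B_sub_B' t : B_ n t -> B'_ n t.
Proof. intros (i & Hi & ->). exists i; split; [lia | reflexivity]. Qed.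

Lemma T_sub_T' t : T_ n t -> T'_ n t.
Proof.
  intros [H|[H|[H|[H|[H|[H|[H|H]]]]]]]; unfold T'_.
  - now left.
  - right; left; apply B_sub_B', H.
  - now do 2 right; left.
  - now do 3 right; left.
  - destruct H as (s & Hs & ->). do 5 right; left; apply hatS_hat, B_sub_B', Hs.
  - now do 6 right; left.
  - now do 7 right; left.
  - destruct H as (k & l & r & s & Hkl & Hrs & -> & _). do 9 right. now exists k, l, r, s.
Qed.

Definition extra_tile (t : tile) : Prop :=
  t = b_tile n n \/ A_ n t \/ t = j_tile n 1 1 0 0.

Lemma B'_split t : B'_ n t -> B_ n t \/ t = b_tile n n.
Proof.
  intros (i & Hi & ->).
  destruct (Z.eq_dec i n) as [-> | Hin]; [now right | left].
  exists i; split; [lia | reflexivity].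
Qed.

Lemma J'_split t : J'_ n t -> J_ n t \/ t = j_tile n 1 1 0 0 \/ hat t = j_tile n 1 1 0 0.
Proof.
  intros (k & l & r & s & Hkl & Hrs & ->).
  destruct Hkl as [[-> ->]|[[-> ->]|[-> ->]]], Hrs as [[-> ->]|[[-> ->]|[-> ->]]];
    try (right; now (left + right)).
  all: left; do 4 eexists; split; [| split; [| split; [reflexivity | split; discriminate]]];
    unfold kl_ok; lia.
Qed.

Lemma T'_split t : T'_ n t -> T_ n t \/ extra_tile t \/ extra_tile (hat t).
Proof.
  unfold extra_tile.
  intros [H|[H|[H|[H|[H|[H|[H|[H|[H|H]]]]]]]]].
  - now left; left.
  - destruct (B'_split t H) as [HB | ->]; [now left; right; left | now right; left; left].
  - now left; do 2 right; left.
  - now left; do 3 right; left.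
  - now right; left; right; left.
  - destruct H as (s & Hs & ->). rewrite hat_hat.
    destruct (B'_split s Hs) as [HB | ->].
    + left; do 4 right; left; now apply hatS_hat.
    + now right; right; left.
  - now left; do 5 right; left.
  - now left; do 6 right; left.
  - right; right; right; left. now apply hat_hatS in H.
  - destruct (J'_split t H) as [HJ | [Hj | Hj]].
    + now left; do 7 right.
    + now right; left; right; right.
    + now right; right; right; right.
Qed.

End Tiles.

Definition transpose (x : configuration) : configuration :=
  fun m => hat (x (snd m, fst m)).

Lemma Omega_transpose S x :
  (forall t, S t -> S (hat t)) -> Omega S x -> Omega S (transpose x).
Proof.
  intros HS (Hs & Hh & Hv); unfold transpose; cbn [fst snd].
  split; [| split].
  - intros [m1 m2]; apply HS, Hs.
  - intros m1 m2; rewrite RIGHT_hat, LEFT_hat; apply Hv.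
  - intros m1 m2; rewrite TOP_hat, BOTTOM_hat; apply Hh.
Qed.

Lemma Omega_T'_transpose n x : Omega (T'_ n) x -> Omega (T'_ n) (transpose x).
Proof. apply Omega_transpose, T'_hat. Qed.

Section ColumnCounters.
Variables (n : Z) (x : configuration).
Hypothesis hn : 1 <= n.
Hypothesis Hx : Omega (T'_ n) x.

Lemma left_neighbour X Y : RIGHT (x (X - 1, Y)) = LEFT (x (X, Y)).
Proof. destruct Hx as (_ & Hh & _). now rewrite Hh, Z.sub_add. Qed.

Lemma lower_neighbour X Y : TOP (x (X, Y - 1)) = BOTTOM (x (X, Y)).
Proof. destruct Hx as (_ & _ & Hv). now rewrite Hv, Z.sub_add. Qed.

Lemma column_type_const X Y Y' : v0 (BOTTOM (x (X, Y))) = v0 (BOTTOM (x (X, Y'))).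
Proof.
  apply (Z_shift_invariant_const (fun Y => v0 (BOTTOM (x (X, Y))))); intros Y0.
  rewrite <- (lower_neighbour X (Y0 + 1)), Z.add_simpl_r.
  apply (T'_v0_TOP n), Hx.
Qed.

Lemma flag_bounds m :
  0 <= v1 (LEFT (x m)) <= 1 /\ 0 <= v1 (RIGHT (x m)) <= 1 /\ 0 <= v0 (BOTTOM (x m)) <= 1.
Proof.
  destruct (T'_colors_V n hn (x m)) as (HR & _ & HL & HB); [apply Hx |].
  apply V_bounds in HR, HL, HB; lia.
Qed.

Lemma counter_nonneg m : 0 <= counter (BOTTOM (x m)).
Proof.
  destruct (T'_colors_V n hn (x m)) as (_ & _ & _ & HB); [apply Hx |].
  apply V_bounds in HB; unfold counter; lia.
Qed.

Lemma counter_step X Y :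
  (v0 (LEFT (x (X, Y - 1))) = 1 /\
     counter (BOTTOM (x (X, Y))) = counter (BOTTOM (x (X, Y - 1))) + 1) \/
  (v0 (LEFT (x (X, Y - 1))) = 0 /\
     counter (BOTTOM (x (X, Y))) = v1 (LEFT (x (X, Y - 1)))).
Proof. rewrite <- lower_neighbour. apply (T'_counter_TOP n), Hx. Qed.

Lemma row_descent_ind X (P : Z -> Prop) :
  (forall Y, v0 (LEFT (x (X, Y - 1))) = 0 -> P Y) ->
  (forall Y, v0 (LEFT (x (X, Y - 1))) = 1 -> P (Y - 1) -> P Y) ->
  forall Y, P Y.
Proof.
  intros H0 H1.
  assert (Hc : forall c, 0 <= c -> forall Y, counter (BOTTOM (x (X, Y))) = c -> P Y).
  { apply (natlike_ind (fun c => forall Y, counter (BOTTOM (x (X, Y))) = c -> P Y)).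
    - intros Y Hc.
      destruct (counter_step X Y) as [[Hrow Hstep] | [Hrow _]]; [| now apply H0].
      pose proof (counter_nonneg (X, Y - 1)); lia.
    - intros c _ IH Y Hc.
      destruct (counter_step X Y) as [[Hrow Hstep] | [Hrow _]]; [| now apply H0].
      apply H1; [exact Hrow |]. apply IH; lia. }
  intros Y; apply (Hc _ (counter_nonneg (X, Y)) Y eq_refl).
Qed.

Lemma exists_type0_row_below X Y : exists Y0, Y0 < Y /\ v0 (LEFT (x (X, Y0))) = 0.
Proof.
  induction Y as [Y Hrow | Y Hrow IH] using (row_descent_ind X).
  - exists (Y - 1); split; [lia | exact Hrow].
  - destruct IH as (Y0 & HY0 & H0); exists Y0; split; [lia | exact H0].
Qed.

End ColumnCounters.

Section ExtraTiles.
Variables (n : Z) (x : configuration).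
Hypothesis hn : 1 <= n.
Hypothesis Hx : Omega (T'_ n) x.

Lemma row_type_const X X' Y : v0 (LEFT (x (X, Y))) = v0 (LEFT (x (X', Y))).
Proof.
  pose proof (column_type_const n (transpose x) (Omega_T'_transpose n x Hx) Y X X') as H.
  unfold transpose in H; cbn [fst snd] in H.
  now rewrite !BOTTOM_hat in H.
Qed.

Lemma exists_type0_column_left X Y : exists X0, X0 < X /\ v0 (BOTTOM (x (X0, Y))) = 0.
Proof.
  destruct (exists_type0_row_below n (transpose x) hn (Omega_T'_transpose n x Hx) Y X)
    as (X0 & HX0 & H).
  exists X0; split; [exact HX0 |].
  unfold transpose in H; cbn [fst snd] in H.
  now rewrite LEFT_hat in H.
Qed.

Lemma counter_gap X X' Y : counter (BOTTOM (x (X, Y))) <= counter (BOTTOM (x (X', Y))) + 1.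
Proof.
  induction Y as [Y Hrow | Y Hrow IH] using (row_descent_ind n x hn Hx X');
    pose proof (counter_step n x Hx X Y);
    pose proof (counter_step n x Hx X' Y);
    pose proof (row_type_const X X' (Y - 1));
    pose proof (flag_bounds n x hn Hx (X, Y - 1));
    pose proof (flag_bounds n x hn Hx (X', Y - 1));
    lia.
Qed.

Lemma A_below_left X Y :
  v0 (BOTTOM (x (X - 1, Y))) = 1 ->
  counter (BOTTOM (x (X - 1, Y))) = counter (BOTTOM (x (X, Y))) + 1 ->
  exists Y', A_ n (x (X - 1, Y')).
Proof.
  induction Y as [Y Hrow | Y Hrow IH] using (row_descent_ind n x hn Hx X); intros Hcol Hc;
    pose proof (counter_step n x Hx X Y);
    pose proof (counter_step n x Hx (X - 1) Y);
    pose proof (row_type_const X (X - 1) (Y - 1));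
    pose proof (column_type_const n x Hx (X - 1) Y (Y - 1)).
  - exists (Y - 1).
    pose proof (f_equal v1 (left_neighbour n x Hx X (Y - 1))).
    pose proof (flag_bounds n x hn Hx (X - 1, Y - 1)).
    pose proof (flag_bounds n x hn Hx (X, Y - 1)).
    apply (T'_A_of_flags n); [apply Hx | lia..].
  - apply IH; lia.
Qed.

Lemma A_left_column X Y : A_ n (x (X, Y)) -> exists Y', A_ n (x (X - 1, Y')).
Proof.
  intros HA; destruct (A_colors n _ HA) as (HL0 & HL1 & HB0 & HBc).
  pose proof (f_equal v1 (left_neighbour n x Hx X Y)) as Hflag.
  pose proof (row_type_const (X - 1) X Y) as Hrow.
  pose proof (counter_gap (X - 1) X Y) as Hgap.
  pose proof (flag_bounds n x hn Hx (X - 1, Y)).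
  pose proof (T'_v2_BOTTOM n (x (X - 1, Y)) (proj1 Hx _) ltac:(lia)) as Hv2.
  apply (A_below_left X Y); unfold counter in *; lia.
Qed.

Lemma A_left_columns X Y :
  A_ n (x (X, Y)) -> forall d, 0 <= d -> exists Y', A_ n (x (X - d, Y')).
Proof.
  intros HA; apply natlike_ind.
  - exists Y; now rewrite Z.sub_0_r.
  - intros d _ (Y' & HA').
    destruct (A_left_column _ _ HA') as (Y'' & HA'').
    exists Y''; now replace (X - Z.succ d) with (X - d - 1) by lia.
Qed.

Lemma A_absent X Y : ~ A_ n (x (X, Y)).
Proof.
  intros HA.
  destruct (exists_type0_column_left X Y) as (X0 & HX0 & Hcol0).
  destruct (A_left_columns X Y HA (X - X0)) as (Y' & HA'); [lia |].
  replace (X - (X - X0)) with X0 in HA' by lia.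
  destruct (A_colors n _ HA') as (_ & _ & HB0 & _).
  rewrite (column_type_const n x Hx X0 Y Y') in Hcol0; lia.
Qed.

Lemma b_n_absent X Y : x (X, Y) <> b_tile n n.
Proof.
  intros Hb. apply (T'_LEFT_neq n (x (X + 1, Y))); [apply Hx |].
  destruct Hx as (_ & Hh & _). now rewrite <- Hh, Hb.
Qed.

Lemma j_1100_absent X Y : x (X, Y) <> j_tile n 1 1 0 0.
Proof.
  intros Hj.
  pose proof (left_neighbour n x Hx X Y) as Hadj.
  pose proof (row_type_const (X - 1) X Y) as Hrow.
  pose proof (counter_gap X (X - 1) Y) as Hgap.
  pose proof (flag_bounds n x hn Hx (X - 1, Y)).
  rewrite Hj in Hadj, Hrow, Hgap.
  pose proof (T'_v2_BOTTOM n (x (X - 1, Y)) (proj1 Hx _) Hrow) as Hv2.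
  rewrite Hadj in Hv2.
  assert (Hcol : v0 (BOTTOM (x (X - 1, Y))) = 0).
  { cbv beta iota zeta delta [j_tile mk_tile col LEFT BOTTOM v0 v1 v2 counter] in *; lia. }
  apply (T'_TOP_01n_mismatch n (x (X - 1, Y - 1)) (x (X, Y - 1))); [apply Hx | apply Hx | ..].
  - apply (left_neighbour n x Hx).
  - rewrite (lower_neighbour n x Hx).
    apply (T'_BOTTOM_of_RIGHT_00n n hn); [apply Hx | exact Hcol | exact Hadj].
  - rewrite (lower_neighbour n x Hx), Hj. cbn. now rewrite Z.add_comm.
Qed.

Lemma extra_tile_absent m : ~ extra_tile n (x m).
Proof.
  destruct m as [X Y]; intros [H | [H | H]].
  - exact (b_n_absent X Y H).
  - exact (A_absent X Y H).
  - exact (j_1100_absent X Y H).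
Qed.

End ExtraTiles.

Theorem proposition7p4 (n : Z) (hn : 1 <= n) :
  forall x : configuration, Omega (T'_ n) x <-> Omega (T_ n) x.
Proof.
  intros x; split.
  - intros Hx; split; [| apply Hx].
    intros [X Y].
    destruct (T'_split n (x (X, Y)) (proj1 Hx _)) as [HT | [Hf | Hf]]; [exact HT | exfalso ..].
    + exact (extra_tile_absent n x hn Hx (X, Y) Hf).
    + exact (extra_tile_absent n (transpose x) hn (Omega_T'_transpose n x Hx) (Y, X) Hf).
  - intros (Hs & Hh & Hv); split; [| split; assumption].
    intros m; apply T_sub_T', Hs.
Qed.
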